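(* Let $[X,d,m]$ be a metric random walk space with invariant probability measure $\nu$. Then $[X,d,m]$ with $\nu$ is $m$-connected if and only if $\nu$ is ergodic.
   Context: A metric random walk space $[X,d,m]$ is a Polish metric space $(X,d)$ with a family $m=(m_x)_{x\in X}$ of Borel probability measures, $x\mapsto m_x(A)$ Borel measurable, each with finite first moment. A Radon measure $\nu$ is invariant if $\nu(A)=\int_X m_x(A)d\nu(x)$ for all $\nu$-measurable $A$. Iterates $m_x^{*1}=m_x$, $m_x^{*n}(A)=\int_X m_z(A)dm_x^{*(n-1)}(z)$; $N^m_D=\{x:m_x^{*n}(D)=0\ \forall n\in\mathbb N\}$. The space is $m$-connected if $\nu(N^m_D)=0$ for every $\nu$-measurable $D$ with $0<\nu(D)<\infty$. A Borel set $B$ is invariant for $m$ if $m_x(B)=1$ for every $x\in B$; the invariant probability measure $\nu$ is ergodic if $\nu(B)\in\{0,1\}$ for every invariant set $B$. *)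

From HB Require Import structures.
From mathcomp Require Import all_boot all_order all_algebra.
From mathcomp Require Import all_classical all_reals all_analysis measurable_realfun.
Set Implicit Arguments. Unset Strict Implicit. Unset Printing Implicit Defensive.
Import Order.TTheory GRing.Theory Num.Theory.
Local Open Scope classical_set_scope.
Local Open Scope ring_scope.

Section Defs.
Context {R : realType} {dX : measure_display} {X : measurableType dX}.

Definition is_metric (dist : X -> X -> R) : Prop :=
  [/\ forall x y, 0 <= dist x y,
      forall x y, dist x y = 0 <-> x = y,
      forall x y, dist x y = dist y x &
      forall x y z, dist x z <= dist x y + dist y z].

Definition dist_open (dist : X -> X -> R) (U : set X) : Prop :=
  forall x, U x -> exists2 e : R, 0 < e & [set y | dist x y < e] `<=` U.

Definition dist_cauchy (dist : X -> X -> R) (u : nat -> X) : Prop :=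
  forall e : R, 0 < e -> exists N : nat,
    forall p q : nat, (N <= p)%N -> (N <= q)%N -> dist (u p) (u q) < e.

Definition dist_complete (dist : X -> X -> R) : Prop :=
  forall u : nat -> X, dist_cauchy dist u ->
    exists l : X, forall e : R, 0 < e -> exists N : nat,
      forall p : nat, (N <= p)%N -> dist (u p) l < e.

Definition dist_separable (dist : X -> X -> R) : Prop :=
  exists S : set X, countable S /\
    forall x (e : R), 0 < e -> exists2 s, S s & dist x s < e.

Definition polish_borel (dist : X -> X -> R) : Prop :=
  [/\ is_metric dist, dist_complete dist, dist_separable dist &
      (@measurable dX X) = <<s [set U | dist_open dist U] >>].

Definition metric_random_walk_space (dist : X -> X -> R)
    (m : X -> probability X R) : Prop :=
  [/\ polish_borel dist,
      (forall A, measurable A -> measurable_fun [set: X] ((fun x => m x A) : X -> \bar R)) &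
      (forall x, (\int[m x]_y (dist x y)%:E < +oo)%E)].

Definition invariant_measure (m : X -> probability X R)
    (nu : set X -> \bar R) : Prop :=
  forall A, measurable A -> nu A = (\int[nu]_x m x A)%E.

(* Iterates: mstar k x = m_x^{*(k+1)}, i.e. mstar 0 x = m_x and
   m_x^{*(n)}(A) = \int m_z(A) dm_x^{*(n-1)}(z). *)
Fixpoint mstar (m : X -> probability X R) (k : nat) : X -> set X -> \bar R :=
  match k with
  | 0%N => fun x A => m x A
  | k'.+1 => fun x A => (\int[mstar m k' x]_z m z A)%E
  end.

Definition NmD (m : X -> probability X R) (D : set X) : set X :=
  [set x | forall k : nat, mstar m k x D = 0%E].

Definition m_connected (m : X -> probability X R) (nu : set X -> \bar R) : Prop :=
  forall D, measurable D -> (0 < nu D)%E -> (nu D < +oo)%E -> nu (NmD m D) = 0%E.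

Definition invariant_set (m : X -> probability X R) (B : set X) : Prop :=
  measurable B /\ forall x, B x -> m x B = 1%E.

Definition ergodic (m : X -> probability X R) (nu : set X -> \bar R) : Prop :=
  forall B, invariant_set m B -> nu B = 0%E \/ nu B = 1%E.

End Defs.

From HB Require Import structures.
From mathcomp Require Import all_boot all_order all_algebra.
From mathcomp Require Import all_classical all_reals all_analysis measurable_realfun.
Set Implicit Arguments. Unset Strict Implicit. Unset Printing Implicit Defensive.
Import Order.TTheory GRing.Theory Num.Theory.
Local Open Scope classical_set_scope.
Local Open Scope ring_scope.

(* An invariant set B is never left by the walk, so B is contained in
   N^m_(X \ B); m-connectedness applied to D = X \ B then forces nu(B) to be 0
   or 1.  Conversely, N^m_D is an invariant set: for x in N^m_D,
   0 = m_x^{*(k+1)}(D) = \int m_y^{*k}(D) dm_x(y), so m_y^{*k}(D) = 0 for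
   m_x-almost every y and every k.  By ergodicity nu(N^m_D) is 0 or 1, and 1 is
   impossible when nu(D) > 0, because by invariance
   nu(D) = \int m_x(D) dnu(x) and m_x(D) vanishes on N^m_D. *)

Section measure_lemmas.
Local Open Scope ereal_scope.
Context d (T : measurableType d) (R : realType).

Lemma probability_setC_eq0 (P : probability T R) (A : set T) :
  measurable A -> P (~` A) = 0 <-> P A = 1.
Proof.
move=> mA; rewrite probability_setC //; split => [/eqP|->]; last exact: subee.
by rewrite sube_eq // add0e => /eqP <-.
Qed.

Lemma integral_eq0_nullC (mu : {measure set T -> \bar R}) (A : set T)
    (f : T -> \bar R) :
  measurable A -> mu (~` A) = 0 -> measurable_fun [set: T] f ->
  (forall x, A x -> f x = 0) -> \int[mu]_x f x = 0.
Proof.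
move=> mA muAC0 mf f0.
rewrite (@ae_eq_integral _ _ _ mu _ (cst 0)) ?integral0 //.
exists (~` A); split => //; first exact: measurableC.
by move=> x /= /not_implyP[_]; apply: contra_not => /f0.
Qed.

Lemma ge0_integral_eq0_negligible (mu : {measure set T -> \bar R})
    (f : T -> \bar R) :
  measurable_fun [set: T] f -> (forall x, 0 <= f x) ->
  \int[mu]_x f x = 0 -> mu.-negligible [set x | f x != 0].
Proof.
move=> mf f0 intf0.
have /(ae_eq_integral_abs mu measurableT mf).1 : \int[mu]_x `|f x| = 0.
  by under eq_integral do rewrite gee0_abs //.
by apply: negligibleS => x /= /eqP fx0 /(_ I).
Qed.

End measure_lemmas.

Section iterated_kernel.
Local Open Scope ereal_scope.
Context {R : realType} {dX : measure_display} {X : measurableType dX}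
  (m : X -> probability X R).
Hypothesis measurable_m :
  forall A, measurable A -> measurable_fun [set: X] (fun x => m x A).

Definition m_kernel (x : X) : {measure set X -> \bar R} := m x.

HB.instance Definition _ := isKernel.Build _ _ X X R m_kernel measurable_m.
HB.instance Definition _ := Kernel_isProbability.Build _ _ X X R m_kernel
  (fun x => probability_setT (m x)).

Fixpoint mstar_kernel (k : nat) : R.-spker X ~> X :=
  if k is k'.+1 then
    SubProbabilityKernel.clone _ _ X X R
      (mkcomp_noparam (mstar_kernel k') m_kernel) _
  else m_kernel.

Lemma mstar_kernelE k x : mstar m k x = mstar_kernel k x.
Proof. by elim: k x => [//|k IH] x /=; apply/funext => A; rewrite IH. Qed.

Lemma integral_mstar_kernelS k x (f : X -> \bar R) :
  (forall y, 0 <= f y) -> measurable_fun [set: X] f ->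
  \int[mstar_kernel k.+1 x]_y f y = \int[mstar_kernel k x]_y \int[m y]_z f z.
Proof.
(* [mkcomp_noparam l k] is [kcomp l (k \o snd)], and [k \o snd] is the
   s-finite kernel [kernel_snd k] of the library. *)
move=> f0 mf; exact: (integral_kcomp (mstar_kernel k)
  (mathcomp.analysis.kernel.kernel_snd m_kernel) x f0 mf).
Qed.

Lemma integral_mstar_kernelSr k x (f : X -> \bar R) :
  (forall y, 0 <= f y) -> measurable_fun [set: X] f ->
  \int[mstar_kernel k.+1 x]_y f y = \int[m x]_y \int[mstar_kernel k y]_z f z.
Proof.
elim: k x f => [|k IH] x f f0 mf; first exact: integral_mstar_kernelS.
rewrite integral_mstar_kernelS // IH; last 2 first.
- by move=> y; exact: integral_ge0.
- exact: (measurable_fun_integral_kernel (l := m_kernel)).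
by apply: eq_integral => y _; rewrite integral_mstar_kernelS.
Qed.

Lemma measurable_mstar k A :
  measurable A -> measurable_fun [set: X] (fun x => mstar m k x A).
Proof.
move=> mA; have -> : (fun x => mstar m k x A) = mstar_kernel k ^~ A.
  by apply/funext => x; rewrite mstar_kernelE.
exact: measurable_kernel.
Qed.

Lemma mstar_ge0 k x A : 0 <= mstar m k x A.
Proof. by rewrite mstar_kernelE. Qed.

Lemma mstarSr k x A :
  measurable A -> mstar m k.+1 x A = \int[m x]_y mstar m k y A.
Proof.
move=> mA; rewrite mstar_kernelE -[A in LHS]setIT -integral_indic //.
rewrite integral_mstar_kernelSr //; last first.
  exact/measurable_EFinP/measurable_indic.
by apply: eq_integral => y _; rewrite integral_indic // setIT mstar_kernelE.
Qed.

Lemma measurable_NmD D : measurable D -> measurable (NmD m D).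
Proof.
move=> mD.
have -> : NmD m D = \bigcap_k ((fun x => mstar m k x D) @^-1` [set 0]).
  by apply/seteqP; split => [x NDx k _|x NDx k] //=; exact: NDx.
apply: bigcapT_measurable => k; rewrite -[_ @^-1` _]setTI.
exact: measurable_mstar mD measurableT [set 0] (emeasurable_set1 _).
Qed.

Lemma invariant_set_NmD D : measurable D -> invariant_set m (NmD m D).
Proof.
move=> mD; have mN := measurable_NmD mD; split => // x NDx.
apply/(probability_setC_eq0 (m x) mN)/negligibleP; first exact: measurableC.
apply: (negligibleS (A := \bigcup_k [set y | mstar m k y D != 0])).
  by move=> y /= /existsNP[k /eqP NDyk]; exists k.
apply: negligible_bigcup => k; apply: ge0_integral_eq0_negligible.
- exact: measurable_mstar.
- by move=> y; exact: mstar_ge0.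
- by rewrite -mstarSr //; exact: NDx.
Qed.

Lemma invariant_set_subset_NmDC B : invariant_set m B -> B `<=` NmD m (~` B).
Proof.
move=> [mB Binv] x Bx k; have mBC := measurableC mB.
have escape0 y : B y -> m y (~` B) = 0 by move/Binv/(probability_setC_eq0 _ mB).
elim: k x Bx => [|k IH] x Bx; first exact: escape0.
rewrite mstarSr //; apply: (integral_eq0_nullC (A := B)) => //.
- exact: escape0.
- exact: measurable_mstar.
Qed.

End iterated_kernel.

Unset Implicit Arguments.

Theorem theorem2p19 (R : realType) (dX : measure_display) (X : measurableType dX)
    (dist : X -> X -> R) (m : X -> probability X R) (nu : probability X R) :
  metric_random_walk_space dist m ->
  invariant_measure m nu ->
  (m_connected m nu <-> ergodic m nu).
Proof.
move=> [_ measurable_m _] nu_inv; split => [conn B invB | erg D mD nuD_gt0 _].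
- have mB : measurable B := invB.1.
  have [nuBC0|nuBC_neq0] := eqVneq (nu (~` B)) 0%E.
    by right; exact/(probability_setC_eq0 _ mB).
  have mN := measurable_NmD measurable_m (measurableC mB).
  have BN := invariant_set_subset_NmDC measurable_m invB.
  left; apply: (subset_measure0 mB mN BN).
  apply: conn; first exact: measurableC.
  + by rewrite lt0e nuBC_neq0 measure_ge0.
  + by rewrite (le_lt_trans (probability_le1 _ (measurableC mB))) ?ltry.
- have invN := invariant_set_NmD measurable_m mD.
  have [//|nuN1] := erg _ invN.
  suff nuD0 : nu D = 0%E by rewrite nuD0 ltxx in nuD_gt0.
  rewrite nu_inv //; apply: (integral_eq0_nullC (A := NmD m D)).
  - exact: invN.1.
  - exact/(probability_setC_eq0 _ invN.1).
  - exact: measurable_m.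
  - by move=> y /(_ 0%N).
Qed.
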